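(* Let $1\le p<\infty$, $f\in B_p(D)$, and $\mathcal L_{\mathbf n}f(\mathbf x)=L(f,X_{\mathbf n},\mathbf x)$. If the right-hand side and the left-hand side MZ inequalities associated with $(X_{\mathbf n},\Lambda_{\mathbf n},\Pi_{\mathbf n},\|\cdot\|_p)$ hold with constants $M_1$ and $M_2$, respectively, then $$\|f-\mathcal L_{\mathbf n}f\|_p\le\Big(\frac{M_2}{M_1}+1\Big)\widetilde E(f,\Pi_{\mathbf n})_p.$$
   Context: $D\subset\mathbb R^d$ nonempty; $B(D)$ is the set of real-valued bounded measurable functions on $D$; $B_p(D)$ is a linear subspace of $B(D)$ with a norm $\|\cdot\|_p$. $\Pi_{\mathbf n}\subset B_p(D)$ is a finite-dimensional space of functions on $D$; $X_{\mathbf n}=\{\mathbf x_{\mathbf k}\}_{\mathbf k\in\mathcal I_{\mathbf n}}\subset D$ is a finite set of distinct points; $\Lambda_{\mathbf n}=\{\lambda_{\mathbf k}\}_{\mathbf k\in\mathcal I_{\mathbf n}}$ are positive weights. It is assumed that for every $f\in B(D)$ there is $P\in\Pi_{\mathbf n}$ with $P(\mathbf x_{\mathbf k})=f(\mathbf x_{\mathbf k})$ for all $\mathbf k$; $L(f,X_{\mathbf n},\mathbf x)=\sum_{\mathbf k\in\mathcal I_{\mathbf n}}f(\mathbf x_{\mathbf k})\ell_{\mathbf k}(\mathbf x)$ with $\ell_{\mathbf k}\in\Pi_{\mathbf n}$, $\ell_{\mathbf k}(\mathbf x_{\mathbf l})=\delta_{\mathbf l,\mathbf k}$, and it is assumed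 that $L(P,X_{\mathbf n},\cdot)=P$ for all $P\in\Pi_{\mathbf n}$. Right-hand side MZ inequality with constant $M$: $M(\sum_{\mathbf k}\lambda_{\mathbf k}|P(\mathbf x_{\mathbf k})|^p)^{1/p}\le\|P\|_p$ for all $P\in\Pi_{\mathbf n}$; left-hand side MZ inequality with constant $M$: $\|P\|_p\le M(\sum_{\mathbf k}\lambda_{\mathbf k}|P(\mathbf x_{\mathbf k})|^p)^{1/p}$ for all $P\in\Pi_{\mathbf n}$. Best one-sided approximation: $\widetilde E(f,\Pi_{\mathbf n})_p=\inf\{\|Q-q\|_p:q,Q\in\Pi_{\mathbf n},\ q(\mathbf x)\le f(\mathbf x)\le Q(\mathbf x)\ \forall\mathbf x\in D\}$. *)

From mathcomp Require Import all_boot all_order all_algebra.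
From mathcomp Require Import all_classical all_reals all_analysis.
Set Implicit Arguments. Unset Strict Implicit. Unset Printing Implicit Defensive.
Import Order.TTheory GRing.Theory Num.Theory.
Import numFieldNormedType.Exports.
Local Open Scope classical_set_scope.
Local Open Scope ring_scope.

Section MZDefs.
Variables (R : realType) (d : nat).
Local Notation pt := 'rV[R]_d.

Definition borel_rV : set (set pt) := <<s [set A : set pt | open A] >>.

Definition measurable_on (D : set pt) (f : pt -> R) : Prop :=
  forall B : set R, measurable B -> borel_rV (D `&` f @^-1` B).

Definition BD (D : set pt) : set (pt -> R) :=
  [set f | measurable_on D f /\ exists M : R, forall x, D x -> `|f x| <= M].

Definition lin_subspace (V : set (pt -> R)) : Prop :=
  V (fun=> 0) /\
  forall (a : R) f g, V f -> V g -> V (fun x => a * f x + g x).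

Definition fin_dim (V : set (pt -> R)) : Prop :=
  exists (m : nat) (b : 'I_m -> (pt -> R)),
    (forall i, V (b i)) /\
    forall f, V f -> exists c : 'I_m -> R,
      forall x, f x = \sum_(i < m) c i * b i x.

(* nrm is a norm on the space V of functions on D (functions agreeing on D
   are identified) *)
Definition norm_on (D : set pt) (V : set (pt -> R)) (nrm : (pt -> R) -> R)
  : Prop :=
  [/\ forall f, V f -> 0 <= nrm f,
      forall f, V f -> nrm f = 0 -> forall x, D x -> f x = 0,
      forall (a : R) f, V f -> nrm (fun x => a * f x) = `|a| * nrm f &
      forall f g, V f -> V g -> nrm (fun x => f x + g x) <= nrm f + nrm g].

Definition monotone_norm (D : set pt) (V : set (pt -> R))
  (nrm : (pt -> R) -> R) : Prop :=
  forall f g, V f -> V g -> (forall x, D x -> `|f x| <= `|g x|) ->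
    nrm f <= nrm g.

Definition Lag (I : finType) (xs : I -> pt) (ell : I -> pt -> R)
  (f : pt -> R) : pt -> R :=
  fun y => \sum_(k : I) f (xs k) * ell k y.

Definition disc_norm (p : R) (I : finType) (xs : I -> pt) (lam : I -> R)
  (P : pt -> R) : R :=
  (\sum_(k : I) lam k * (`|P (xs k)| `^ p)) `^ p^-1.

Definition MZ_right (p : R) (I : finType) (xs : I -> pt) (lam : I -> R)
  (Pi : set (pt -> R)) (nrm : (pt -> R) -> R) (M : R) : Prop :=
  forall P, Pi P -> M * disc_norm p xs lam P <= nrm P.

Definition MZ_left (p : R) (I : finType) (xs : I -> pt) (lam : I -> R)
  (Pi : set (pt -> R)) (nrm : (pt -> R) -> R) (M : R) : Prop :=
  forall P, Pi P -> nrm P <= M * disc_norm p xs lam P.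

(* best one-sided approximation  E~(f, Pi)_p  (an extended real; +oo if
   there is no admissible pair) *)
Definition one_sided_E (D : set pt) (Pi : set (pt -> R))
  (nrm : (pt -> R) -> R) (f : pt -> R) : \bar R :=
  ereal_inf [set e : \bar R | exists q Q : pt -> R,
     [/\ Pi q, Pi Q, (forall x, D x -> q x <= f x <= Q x) &
          e = (nrm (fun x => Q x - q x))%:E]].
End MZDefs.

(* Take q, Q in Pi with q <= f <= Q on D. Since L reproduces q, on D we have
   f - L f = (f - q) - L (f - q). Monotonicity of the norm bounds the first
   term by ||Q - q||. For the second, the left MZ inequality, the equality
   L (f - q) = f - q at the nodes, the pointwise bound 0 <= f - q <= Q - q and
   the right MZ inequality give
   ||L (f - q)|| <= M2 |f - q|_disc <= M2 |Q - q|_disc <= (M2 / M1) ||Q - q||.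
   Taking the infimum over all such pairs (q, Q) gives the bound. *)
From mathcomp Require Import all_boot all_order all_algebra.
From mathcomp Require Import all_classical all_reals all_analysis.
Set Implicit Arguments. Unset Strict Implicit. Unset Printing Implicit Defensive.
Import Order.TTheory GRing.Theory Num.Theory.
Local Open Scope classical_set_scope.
Local Open Scope ring_scope.

Section LinearSubspace.
Variables (R : realType) (d : nat) (V : set ('rV[R]_d -> R)).
Hypothesis linV : lin_subspace V.

Lemma lin_subspaceD f g : V f -> V g -> V (fun x => f x + g x).
Proof.
move=> Vf Vg; case: linV => _ /(_ 1 f g Vf Vg).
by under eq_fun do rewrite mul1r.
Qed.

Lemma lin_subspaceZ a f : V f -> V (fun x => a * f x).
Proof.
move=> Vf; case: linV => V0 /(_ a f _ Vf V0).
by under eq_fun do rewrite addr0.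
Qed.

Lemma lin_subspaceB f g : V f -> V g -> V (fun x => f x - g x).
Proof.
move=> Vf Vg; have := lin_subspaceD Vf (lin_subspaceZ (-1) Vg).
by under eq_fun do rewrite mulN1r.
Qed.

Lemma lin_subspace_sum (I : Type) (s : seq I) (c : I -> R)
    (b : I -> 'rV[R]_d -> R) :
  (forall k, V (b k)) -> V (fun x => \sum_(k <- s) c k * b k x).
Proof.
move=> Vb; elim: s => [|k s IHs].
  by under eq_fun do rewrite big_nil; case: linV.
under eq_fun do rewrite big_cons.
by case: linV => _; apply.
Qed.

End LinearSubspace.

Section MonotoneNorm.
Variables (R : realType) (d : nat) (D : set 'rV[R]_d) (V : set ('rV[R]_d -> R)).
Variable nrm : ('rV[R]_d -> R) -> R.
Hypothesis linV : lin_subspace V.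
Hypothesis nrmV : norm_on D V nrm.
Hypothesis monoV : monotone_norm D V nrm.

Lemma monotone_norm_eq f g : V f -> V g -> (forall x, D x -> f x = g x) ->
  nrm f = nrm g.
Proof.
by move=> Vf Vg fg; apply/le_anti/andP; split; apply: monoV => // x Dx;
  rewrite fg.
Qed.

Lemma norm_onB_le f g : V f -> V g -> nrm (fun x => f x - g x) <= nrm f + nrm g.
Proof.
case: nrmV => _ _ nrmZ nrmD Vf Vg.
have V_g := lin_subspaceZ linV (-1) Vg.
have := nrmD _ _ Vf V_g; rewrite nrmZ // normrN normr1 mul1r.
by under eq_fun do rewrite mulN1r.
Qed.

End MonotoneNorm.

Section Interpolation.
Variables (R : realType) (d : nat) (I : finType).
Variables (xs : I -> 'rV[R]_d) (ell : I -> 'rV[R]_d -> R).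
Hypothesis ell_nodes : forall k l, ell k (xs l) = (if l == k then 1 else 0).

Lemma Lag_nodes g l : Lag xs ell g (xs l) = g (xs l).
Proof.
rewrite /Lag (bigD1 l) //= ell_nodes eqxx mulr1 big1 ?addr0 // => k /negbTE.
by rewrite ell_nodes eq_sym => ->; rewrite mulr0.
Qed.

Lemma LagB f g x :
  Lag xs ell (fun y => f y - g y) x = Lag xs ell f x - Lag xs ell g x.
Proof. by rewrite /Lag -sumrB; apply: eq_bigr => k _; rewrite mulrBl. Qed.

Lemma Lag_in (Pi : set ('rV[R]_d -> R)) g :
  lin_subspace Pi -> (forall k, Pi (ell k)) -> Pi (Lag xs ell g).
Proof. by move=> linPi ell_in; apply: lin_subspace_sum. Qed.

End Interpolation.

Lemma disc_norm_le (R : realType) (d : nat) (I : finType) (p : R)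
    (xs : I -> 'rV[R]_d) (lam : I -> R) P P' :
  0 < p -> (forall k, 0 <= lam k) -> (forall k, `|P (xs k)| <= `|P' (xs k)|) ->
  disc_norm p xs lam P <= disc_norm p xs lam P'.
Proof.
move=> p0 lam0 PP'.
have sum_ge0 (F : 'rV[R]_d -> R) : 0 <= \sum_k lam k * `|F (xs k)| `^ p.
  by apply: sumr_ge0 => k _; rewrite mulr_ge0 ?powR_ge0.
apply: ge0_ler_powR; rewrite ?nnegrE ?invr_ge0 ?sum_ge0 ?(ltW p0) //.
apply: ler_sum => k _; apply: ler_wpM2l => //.
by apply: ge0_ler_powR; rewrite ?nnegrE ?(ltW p0).
Qed.

Section MZInterpolation.
Variables (R : realType) (d : nat) (D : set 'rV[R]_d) (I : finType).
Variables (Pi : set ('rV[R]_d -> R)) (nrm : ('rV[R]_d -> R) -> R).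
Variables (xs : I -> 'rV[R]_d) (lam : I -> R) (ell : I -> 'rV[R]_d -> R).
Variables (p M1 M2 : R).
Hypothesis linPi : lin_subspace Pi.
Hypothesis ell_in : forall k, Pi (ell k).
Hypothesis ell_nodes : forall k l, ell k (xs l) = (if l == k then 1 else 0).
Hypotheses (p_gt0 : 0 < p) (lam_ge0 : forall k, 0 <= lam k).
Hypotheses (M1_gt0 : 0 < M1) (M2_ge0 : 0 <= M2).
Hypothesis MZr : MZ_right p xs lam Pi nrm M1.
Hypothesis MZl : MZ_left p xs lam Pi nrm M2.

Lemma MZ_Lag_le g P : Pi P -> (forall k, `|g (xs k)| <= `|P (xs k)|) ->
  nrm (Lag xs ell g) <= M2 / M1 * nrm P.
Proof.
move=> PiP gP.
have disc_le : disc_norm p xs lam (Lag xs ell g) <= disc_norm p xs lam P.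
  by apply: disc_norm_le => // k; rewrite Lag_nodes.
apply: le_trans (MZl (Lag_in xs g linPi ell_in)) _.
rewrite -mulrA ler_wpM2l // ler_pdivlMl //.
exact: le_trans (ler_wpM2l (ltW M1_gt0) disc_le) (MZr PiP).
Qed.

Variable Bp : set ('rV[R]_d -> R).
Hypotheses (linBp : lin_subspace Bp) (Pi_Bp : Pi `<=` Bp).
Hypotheses (nrmBp : norm_on D Bp nrm) (monoBp : monotone_norm D Bp nrm).
Hypothesis Lag_reproduces : forall P, Pi P -> forall x, D x -> Lag xs ell P x = P x.
Hypothesis xs_in : forall k, D (xs k).

Lemma Lag_error_le_gap f q Q : Bp f -> Pi q -> Pi Q ->
  (forall x, D x -> q x <= f x <= Q x) ->
  nrm (fun x => f x - Lag xs ell f x) <= (M2 / M1 + 1) * nrm (fun x => Q x - q x).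
Proof.
move=> Bf Piq PiQ qfQ.
have Bq := Pi_Bp Piq; have PiQq := lin_subspaceB linPi PiQ Piq.
have Bfq : Bp (fun x => f x - q x) by exact: lin_subspaceB.
have BLfq := Pi_Bp (Lag_in xs (fun x => f x - q x) linPi ell_in).
have gap x : D x -> `|f x - q x| <= `|Q x - q x|.
  move=> /qfQ /andP[qf fQ].
  by rewrite !ger0_norm ?subr_ge0 ?lerB // (le_trans qf).
have -> : nrm (fun x => f x - Lag xs ell f x) =
          nrm (fun x => (f x - q x) - Lag xs ell (fun y => f y - q y) x).
  have BLf := Pi_Bp (Lag_in xs f linPi ell_in).
  apply: (monotone_norm_eq monoBp (lin_subspaceB linBp Bf BLf)
                                  (lin_subspaceB linBp Bfq BLfq)).
  by move=> x Dx; rewrite LagB (Lag_reproduces Piq Dx) opprB addrA subrK.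
apply: le_trans (norm_onB_le linBp nrmBp Bfq BLfq) _.
rewrite mulrDl mul1r [X in _ <= X]addrC lerD //.
  exact: (monoBp Bfq (Pi_Bp PiQq)).
by apply: MZ_Lag_le => // k; apply/gap/xs_in.
Qed.

End MZInterpolation.

Lemma le_one_sided_E (R : realType) (d : nat) (D : set 'rV[R]_d)
    (Pi : set ('rV[R]_d -> R)) (nrm : ('rV[R]_d -> R) -> R) (f : 'rV[R]_d -> R)
    (a c : R) :
  0 < c ->
  (forall q Q, Pi q -> Pi Q -> (forall x, D x -> q x <= f x <= Q x) ->
     a <= c * nrm (fun x => Q x - q x)) ->
  (a%:E <= c%:E * one_sided_E D Pi nrm f)%E.
Proof.
move=> c_gt0 a_le.
have -> : a = c * (a / c) by rewrite mulrC divfK ?gt_eqF.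
rewrite EFinM lee_wpmul2l ?lee_fin ?(ltW c_gt0) //.
apply: le_ereal_inf_tmp => _ [q [Q [Piq PiQ qfQ ->]]].
by rewrite lee_fin ler_pdivrMr // mulrC; apply: a_le.
Qed.

Theorem theorem2p2 (R : realType) (d : nat) (D : set 'rV[R]_d)
  (Bp : set ('rV[R]_d -> R) ) (nrm : ('rV[R]_d -> R) -> R)
  (Pi : set ('rV[R]_d -> R))
  (I : finType) (xs : I -> 'rV[R]_d) (lam : I -> R) (ell : I -> 'rV[R]_d -> R)
  (p M1 M2 : R) (f : 'rV[R]_d -> R) :
  D !=set0 ->
  Bp `<=` BD D -> lin_subspace Bp ->
  norm_on D Bp nrm -> monotone_norm D Bp nrm ->
  Pi `<=` Bp -> lin_subspace Pi -> fin_dim Pi ->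
  injective xs -> (forall k, D (xs k)) -> (forall k, 0 < lam k) ->
  (forall g, BD D g -> exists P, Pi P /\ forall k, P (xs k) = g (xs k)) ->
  (forall k, Pi (ell k)) ->
  (forall k l, ell k (xs l) = (if l == k then 1 else 0)) ->
  (forall P, Pi P -> forall x, D x -> Lag xs ell P x = P x) ->
  1 <= p ->
  0 < M1 -> 0 < M2 ->
  MZ_right p xs lam Pi nrm M1 ->
  MZ_left p xs lam Pi nrm M2 ->
  Bp f ->
  ((nrm (fun x => f x - Lag xs ell f x))%:E
     <= (M2 / M1 + 1)%:E * one_sided_E D Pi nrm f)%E.
Proof.
move=> _ _ linBp nrmBp monoBp Pi_Bp linPi _ _ xs_in lam_gt0 _ ell_in ell_nodes
  Lag_reproduces p_ge1 M1_gt0 M2_gt0 MZr MZl Bf.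
have p_gt0 : 0 < p by apply: lt_le_trans p_ge1.
have lam_ge0 k : 0 <= lam k by apply: ltW.
apply: le_one_sided_E; first by rewrite addr_gt0 ?divr_gt0.
move=> q Q Piq PiQ qfQ.
exact: (Lag_error_le_gap linPi ell_in ell_nodes p_gt0 lam_ge0 M1_gt0 (ltW M2_gt0)
  MZr MZl linBp Pi_Bp nrmBp monoBp Lag_reproduces xs_in Bf Piq PiQ qfQ).
Qed.
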